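(* Let $X$ be a topological space and $x\in X$. Then $\mathrm{cl}_\theta(\{x\})$ equals the union of all finitely non-Hausdorff subsets of $X$ containing $x$, and also equals the union of all maximal finitely non-Hausdorff subsets of $X$ containing $x$.
   Context: For $A\subseteq X$, $\mathrm{cl}_\theta(A):=\{y\in X:\ \overline{B}\cap A\neq\emptyset$ for every open neighborhood $B$ of $y\}$. A non-empty subset $A$ of $X$ is finitely non-Hausdorff if for every non-empty finite $F\subseteq A$ and every family $\{U_y:y\in F\}$ of open neighborhoods $U_y$ of $y$, $\bigcap_{y\in F}U_y\neq\emptyset$; it is maximal finitely non-Hausdorff if no finitely non-Hausdorff subset of $X$ properly contains it. *)

From HB Require Import structures.
From mathcomp Require Import all_boot all_order all_algebra.
From mathcomp Require Import all_classical all_reals all_analysis.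
Set Implicit Arguments. Unset Strict Implicit. Unset Printing Implicit Defensive.
Local Open Scope classical_set_scope.

Definition theta_closure (X : topologicalType) (A : set X) : set X :=
  [set y | forall B : set X, open B -> B y -> closure B `&` A !=set0].

Definition finitely_nonHausdorff (X : topologicalType) (A : set X) : Prop :=
  A !=set0 /\
  forall (F : set X) (U : X -> set X),
    finite_set F -> F !=set0 -> F `<=` A ->
    (forall y, F y -> open (U y) /\ U y y) ->
    \bigcap_(y in F) U y !=set0.

Definition maximal_finitely_nonHausdorff (X : topologicalType) (A : set X) : Prop :=
  finitely_nonHausdorff A /\
  forall B : set X, finitely_nonHausdorff B -> A `<=` B -> B = A.

(* y lies in cl_theta({x}) exactly when every open neighbourhood of y meets
   every open neighbourhood of x, i.e. when {x, y} is finitely non-Hausdorff;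
   conversely any two points of a finitely non-Hausdorff set have this
   property.  Finite non-Hausdorffness only involves finite subsets, so it is
   preserved by unions of chains, and Zorn's lemma enlarges {x, y} to a
   maximal finitely non-Hausdorff set. *)
From HB Require Import structures.
From mathcomp Require Import all_boot all_order all_algebra.
From mathcomp Require Import all_classical all_reals all_analysis.
Local Open Scope classical_set_scope.

Lemma theta_closure1P (X : topologicalType) (x y : X) :
  theta_closure [set x] y <->
  (forall B V : set X, open B -> B y -> open V -> V x -> B `&` V !=set0).
Proof.
split=> [thy B V oB By oV Vx | meet B oB By].
- have [z [clBz zx]] := thy B oB By; rewrite zx in clBz; apply: clBz.
  exact: open_nbhs_nbhs.
- exists x; split=> // W; rewrite nbhsE => -[V [oV Vx] VW].
  have [z [Bz Vz]] := meet B V oB By oV Vx.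
  by exists z; split=> //; apply: VW.
Qed.

Lemma finitely_nonHausdorff_theta_closure (X : topologicalType) (A : set X)
    (x y : X) :
  finitely_nonHausdorff A -> A x -> A y -> theta_closure [set x] y.
Proof.
move=> [_ fnH] Ax Ay; apply/theta_closure1P => B V oB By oV Vx.
have [yx|nyx] := eqVneq y x; first by exists y; split=> //; rewrite yx.
pose U w : set X := if w == x then V else B.
have [||||z Uz] := fnH [set x; y] U.
- exact: finite_set2.
- by exists x; left.
- by move=> w [->|->].
- by move=> w [->|->]; rewrite /U ?eqxx ?(negbTE nyx).
- have := Uz y (or_intror erefl); have := Uz x (or_introl erefl).
  by rewrite /U eqxx (negbTE nyx); exists z.
Qed.

Lemma theta_closure1_finitely_nonHausdorff2 (X : topologicalType) (x y : X) :
  theta_closure [set x] y -> finitely_nonHausdorff [set x; y].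
Proof.
move=> /theta_closure1P meet; split; first by exists x; left.
move=> F U _ _ Fxy oU.
have memU w : F w -> U w w by move=> /oU[].
have [Fx|nFx] := pselect (F x); last first.
  by exists y => w Fw; case: (Fxy w Fw) => wE; rewrite wE in Fw *; [|exact: memU].
have [Fy|nFy] := pselect (F y); last first.
  by exists x => w Fw; case: (Fxy w Fw) => wE; rewrite wE in Fw *; [exact: memU|].
have [[oUx Uxx] [oUy Uyy]] := (oU x Fx, oU y Fy).
have [z [Uyz Uxz]] := meet _ _ oUy Uyy oUx Uxx.
by exists z => w Fw; case: (Fxy w Fw) => ->.
Qed.

Lemma chain_finite_subset {T : eqType} {C : set (set T)} {G : set T} :
  total_on C subset -> C !=set0 -> finite_set G ->
  G `<=` \bigcup_(Y in C) Y -> exists2 Y, C Y & G `<=` Y.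
Proof.
move=> tot [Y0 CY0] /finite_seqP[s ->] {G}.
elim: s => [|a s IH] sC; first by exists Y0 => // z; rewrite /= in_nil.
have [Ya CYa Yaa] := sC a (mem_head _ _).
have [|Ys CYs sYs] := IH.
  by move=> z zs; apply: sC; rewrite /= in_cons zs orbT.
have cons_sub Y : Y a -> [set` s] `<=` Y -> [set` a :: s] `<=` Y.
  by move=> Ya' sY z; rewrite /= in_cons => /orP[/eqP->|/sY].
have [YaYs|YsYa] := tot _ _ CYa CYs.
- by exists Ys => //; apply: cons_sub => //; apply: YaYs.
- by exists Ya => //; apply: cons_sub => // z /sYs /YsYa.
Qed.

Lemma finitely_nonHausdorff_bigcup (X : topologicalType) (C : set (set X)) :
  total_on C subset -> (forall Y, C Y -> Y = set0 \/ finitely_nonHausdorff Y) ->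
  \bigcup_(Y in C) Y !=set0 -> finitely_nonHausdorff (\bigcup_(Y in C) Y).
Proof.
move=> tot fnHC CC0; split=> // F U finF [f Ff] FC.
have [|Y CY FY] := chain_finite_subset tot _ finF FC.
  by have [y [Y CY _]] := CC0; exists Y.
have [Y0|[_ fnHY]] := fnHC Y CY; last by apply: fnHY => //; exists f.
by have := FY f Ff; rewrite Y0.
Qed.

Lemma finitely_nonHausdorff_maximal_extension (X : topologicalType) (A0 : set X) :
  finitely_nonHausdorff A0 ->
  exists2 A, maximal_finitely_nonHausdorff A & A0 `<=` A.
Proof.
move=> fnHA0; have [a0 A0a0] := fnHA0.1.
(* [set0] is admitted because Zorn_bigcup also asks for the union of the
   empty chain. *)
pose P := [set B : set X | B = set0 \/ finitely_nonHausdorff B /\ A0 `<=` B].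
have [|A [PA maxA]] := Zorn_bigcup (P := P).
  move=> C CP tot.
  have [CC0|/set0P/negP/negPn/eqP] := pselect (\bigcup_(Y in C) Y !=set0);
    last by left.
  right; split.
    by apply: finitely_nonHausdorff_bigcup => // Y /CP[Y0|[fnHY _]]; [left|right].
  have [y [Y CY Yy]] := CC0.
  have [Y0|[_ A0Y]] := CP _ CY; first by rewrite Y0 in Yy.
  by move=> z /A0Y Yz; exists Y.
have [A0E|[fnHA A0A]] := PA.
  exfalso; apply: (maxA A0); last by rewrite /P; right; split.
  by rewrite A0E; split=> [z //|/(_ a0 A0a0)].
exists A => //; split=> // B fnHB AB.
apply: contrapT => BA; apply: (maxA B).
  by split=> // BA'; apply: BA; apply/seteqP.
by right; split=> //; exact: subset_trans AB.
Qed.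

Theorem corollary2p13 (X : topologicalType) (x : X) :
  theta_closure [set x] =
    \bigcup_(A in [set A : set X | finitely_nonHausdorff A /\ A x]) A /\
  theta_closure [set x] =
    \bigcup_(A in [set A : set X | maximal_finitely_nonHausdorff A /\ A x]) A.
Proof.
split; apply/seteqP; split=> y.
- move=> /theta_closure1_finitely_nonHausdorff2 fnHxy.
  by exists [set x; y]; [split=> //; left | right].
- by move=> [A [fnHA Ax] Ay]; exact: finitely_nonHausdorff_theta_closure Ay.
- move=> /theta_closure1_finitely_nonHausdorff2.
  move=> /finitely_nonHausdorff_maximal_extension[A maxA xyA].
  by exists A; [split=> //; apply: xyA; left | apply: xyA; right].
- by move=> [A [[fnHA _] Ax] Ay]; exact: finitely_nonHausdorff_theta_closure Ay.
Qed.
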